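(* Let $G$ be a finite connected unweighted graph with graph distance $d$, and fix a vertex $r$. For vertices $a,b$ write $(a.b)_r=\tfrac12\big(d(a,r)+d(b,r)-d(a,b)\big)$, and for vertices $x\neq y$ define $$f(x,y)=\max_{x=w_1,w_2,\dots,w_k=y}\ \min_{1\le i\le k-1}(w_i.w_{i+1})_r,$$ the maximum taken over all finite sequences of vertices (of arbitrary length $k\ge 2$) starting at $x$ and ending at $y$. Then for every pair of distinct vertices $x,y$ there exists a sequence $x=w_1,\dots,w_k=y$ attaining the maximum in $f(x,y)$ which is a path in $G$ (i.e. $w_iw_{i+1}\in E(G)$ for all $i$). Moreover, for such a maximizing path, letting $\alpha=\min_i d(w_i,r)$, we have $f(x,y)=\alpha-\tfrac12$ if there exists an $i$ with $d(w_i,r)=d(w_{i+1},r)=\alpha$, and $f(x,y)=\alpha$ otherwise.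
   Context: $(a.b)_r$ is the Gromov product with root $r$. A sequence attains the maximum in $f(x,y)$ if its value $\min_i (w_i.w_{i+1})_r$ equals $f(x,y)$. *)

From HB Require Import structures.
From mathcomp Require Import all_boot all_order all_algebra.
Set Implicit Arguments. Unset Strict Implicit. Unset Printing Implicit Defensive.
Import Order.TTheory GRing.Theory Num.Theory.
Local Open Scope ring_scope.

(* A finite simple graph: vertex type T : finType, adjacency e : rel T,
   assumed symmetric and irreflexive in the theorem. *)

Definition walkn (T : finType) (e : rel T) (a b : T) (n : nat) : bool :=
  [exists s : n.-tuple T, path e a s && (last a s == b)].

(* Graph distance: least number of edges of a walk from a to b.
   In a connected graph a shortest walk has < #|T| edges, so searching
   n in 0 .. #|T|-1 is exhaustive. *)
Definition dist (T : finType) (e : rel T) (a b : T) : nat :=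
  find (walkn e a b) (iota 0 #|T|).

Definition gromov (T : finType) (e : rel T) (r a b : T) : rat :=
  ((dist e a r)%:R + (dist e b r)%:R - (dist e a b)%:R) / 2.

Definition minl (l : seq rat) : rat :=
  match l with [::] => 0 | a :: l' => foldr Num.min a l' end.

(* value of the sequence w_1 = x, w_2 .. w_k = s : min_i (w_i . w_{i+1})_r *)
Definition seqval (T : finType) (e : rel T) (r x : T) (s : seq T) : rat :=
  minl (pairmap (gromov e r) x s).

Definition maximizing (T : finType) (e : rel T) (r x y : T) (s : seq T) : Prop :=
  [/\ s != [::], last x s = y &
      forall s' : seq T, s' != [::] -> last x s' = y ->
        seqval e r x s' <= seqval e r x s].

Definition alpha (T : finType) (e : rel T) (r x : T) (s : seq T) : nat :=
  foldr minn (dist e x r) (map (fun w => dist e w r) s).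

Definition flat_edge (T : finType) (e : rel T) (r x : T) (s : seq T) : bool :=
  has (fun p : T * T => (dist e p.1 r == alpha e r x s) && (dist e p.2 r == alpha e r x s))
      (zip (x :: s) s).

From mathcomp Require Import all_boot all_order all_algebra.
From mathcomp Require Import zify ring lra.
From Stdlib Require Import Classical.
Import Order.TTheory GRing.Theory Num.Theory.
Set Implicit Arguments. Unset Strict Implicit. Unset Printing Implicit Defensive.
Local Open Scope ring_scope.

(* Along an edge ab the distances to r differ by at most one, so
   (a.b)_r = (d(a,r) + d(b,r) - 1)/2 is a half-integer; the minimum over a path
   is therefore alpha - 1/2 when the path contains an edge with both ends at the
   lowest level alpha, and alpha otherwise.  Any sequence of vertices can be
   turned into a path of at least the same value: replace each step w_i w_{i+1}
   by a geodesic, along which all Gromov products are at least (w_i.w_{i+1})_r.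
   Since the path values range over a finite set of half-integers, a best path
   exists and it maximizes over all sequences. *)

Lemma exists_max_nat_valued (A : Type) (R : numDomainType) (Q : A -> Prop)
    (v : A -> R) (N : nat) :
  (exists a, Q a) -> (forall a, Q a -> exists2 m, (m <= N)%N & v a = m%:R) ->
  exists2 a, Q a & forall b, Q b -> v b <= v a.
Proof.
elim: N => [|N IHN] [a Qa] vQ.
  exists a => // b Qb.
  by have [[|m] // _ ->] := vQ b Qb; have [[|m] // _ ->] := vQ a Qa.
have [[c Qc vc] | noN1] := classic (exists2 c, Q c & v c = N.+1%:R).
  by exists c => // b Qb; have [m le_m ->] := vQ b Qb; rewrite vc ler_nat.
apply: IHN; first by exists a.
move=> b Qb; have [m le_m vb] := vQ b Qb; exists m => //.
move: le_m; rewrite leq_eqVlt => /predU1P [Em|//].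
by case: noN1; exists b; rewrite // vb Em.
Qed.

Lemma minl_mem (l : seq rat) : l != [::] -> minl l \in l.
Proof.
case: l => [|a l] //= _; elim: l => [|b l IHl] /=; first by rewrite inE.
rewrite /Num.min; case: ifP => _; first by rewrite !inE eqxx orbT.
by move: IHl; rewrite !inE => /orP [->|->]; rewrite ?orbT.
Qed.

Lemma minl_le (l : seq rat) v : v \in l -> minl l <= v.
Proof.
case: l => [|a l] //=; elim: l v => [|b l IHl] v /=; first by rewrite inE => /eqP ->.
rewrite !inE ge_min => /or3P [/eqP ->|/eqP ->|lv].
- by rewrite IHl ?orbT // inE eqxx.
- by rewrite lexx.
- by rewrite IHl ?orbT // inE lv orbT.
Qed.

Lemma le_minl (l : seq rat) g : l != [::] -> (g <= minl l) = all (>= g) l.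
Proof.
move=> l_ne; apply/idP/allP => [g_le v lv|g_le]; first exact: le_trans g_le (minl_le lv).
exact: g_le (minl_mem l_ne).
Qed.

Lemma minl_eq (l : seq rat) m :
  (forall v, v \in l -> m <= v) -> (exists2 v, v \in l & v <= m) -> minl l = m.
Proof.
move=> m_lb [v lv v_le]; apply/le_anti; rewrite (le_trans (minl_le lv)) //=.
by rewrite le_minl; [apply/allP | case: (l) lv].
Qed.

Lemma pairmap_zip (S R : Type) (f : S -> S -> R) x s :
  pairmap f x s = [seq f p.1 p.2 | p <- zip (x :: s) s].
Proof. by elim: s x => [|y s IHs] x //=; rewrite IHs. Qed.

Lemma path_zip (T : eqType) (e : rel T) x s p :
  path e x s -> p \in zip (x :: s) s -> [/\ e p.1 p.2, p.1 \in x :: s & p.2 \in x :: s].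
Proof.
elim: s x => [|y s IHs] x //= /andP [exy pys].
rewrite inE => /orP [/eqP -> | p_in] /=; first by rewrite !inE !eqxx orbT.
by have [? p1 p2] := IHs y pys p_in; rewrite p1 orbT in_cons p2 orbT.
Qed.

Lemma zip_cover (T : eqType) x (s : seq T) w :
  s != [::] -> w \in x :: s -> exists2 p, p \in zip (x :: s) s & (p.1 = w \/ p.2 = w).
Proof.
elim: s x => [|y s IHs] x //= _.
rewrite !inE => /or3P [/eqP ->|/eqP ->|w_in].
- by exists (x, y); [rewrite inE eqxx | left].
- by exists (x, y); [rewrite inE eqxx | right].
- case: s IHs w_in => [|z s] // IHs w_in.
  have w_in' : w \in [:: y, z & s] by rewrite in_cons w_in orbT.
  have [p p_in pw] := IHs y isT w_in'.
  by exists p => //; rewrite inE p_in orbT.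
Qed.

Section Distance.

Variables (T : finType) (e : rel T).

Lemma walknP a b n :
  reflect (exists s : seq T, [/\ size s = n, path e a s & last a s = b]) (walkn e a b n).
Proof.
apply: (iffP existsP) => [[s /andP [ps /eqP ls]]|[s [sz ps ls]]].
  by exists (val s); rewrite size_tuple.
have sz' : size s == n by apply/eqP.
by exists (Tuple sz'); rewrite /= ps ls eqxx.
Qed.

Lemma walkn_cat a b c m n : walkn e a b m -> walkn e b c n -> walkn e a c (m + n).
Proof.
move=> /walknP [s [<- ps ls]] /walknP [t [<- pt lt]].
by apply/walknP; exists (s ++ t); rewrite size_cat cat_path last_cat ps ls pt lt.
Qed.

Lemma walkn_rev a b n : symmetric e -> walkn e a b n -> walkn e b a n.
Proof.
move=> e_sym /walknP [s [<- ps <-]]; apply/walknP.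
exists (rev (belast a s)); rewrite size_rev size_belast rev_path; split=> //.
  by rewrite (eq_path (_ : [rel x y | e y x] =2 e)) // => x y; rewrite /= e_sym.
by case: s {ps} => //= y s; rewrite rev_cons last_rcons.
Qed.

Hypothesis e_conn : forall a b : T, connect e a b.

Lemma walkn_bounded a b : has (walkn e a b) (iota 0 #|T|).
Proof.
have /connectP [p pp ->] := e_conn a b.
have [q pq uq _] := shortenP pp.
apply/hasP; exists (size q); last by apply/walknP; exists q.
by rewrite mem_iota /= add0n; have := max_card (mem (a :: q)); rewrite (card_uniqP uq).
Qed.

Lemma dist_lt_card a b : (dist e a b < #|T|)%N.
Proof. by rewrite -[X in (_ < X)%N](size_iota 0 #|T|) -has_find walkn_bounded. Qed.

Lemma dist_walkn a b : walkn e a b (dist e a b).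
Proof. by have := nth_find 0 (walkn_bounded a b); rewrite nth_iota ?add0n ?dist_lt_card. Qed.

Lemma dist_le_walkn a b n : walkn e a b n -> (dist e a b <= n)%N.
Proof.
move=> wn; rewrite leqNgt; apply/negP => lt_n.
have lt_nT : (n < #|T|)%N := leq_trans lt_n (ltnW (dist_lt_card a b)).
by have := before_find 0 lt_n; rewrite nth_iota ?add0n ?wn.
Qed.

Lemma dist_triangle a b c : (dist e a c <= dist e a b + dist e b c)%N.
Proof. by apply: dist_le_walkn; apply: walkn_cat; apply: dist_walkn. Qed.

Lemma dist_eq0 a b : dist e a b = 0%N -> a = b.
Proof. by move=> d0; have := dist_walkn a b; rewrite d0 => /walknP [s [/size0nil -> _ <-]]. Qed.

Lemma dist_edge_le1 a b : e a b -> (dist e a b <= 1)%N.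
Proof. by move=> eab; apply: dist_le_walkn; apply/walknP; exists [:: b]; rewrite /= eab. Qed.

Lemma dist_edge a b : irreflexive e -> e a b -> dist e a b = 1%N.
Proof.
move=> e_irr eab; have := dist_edge_le1 eab.
case: (dist e a b) (@dist_eq0 a b) => [|[|n]] // ab _.
by move: eab; rewrite ab // e_irr.
Qed.

Lemma dist_succ a b n : dist e a b = n.+1 -> exists2 c, e a c & dist e c b = n.
Proof.
move=> dn; have := dist_walkn a b; rewrite dn.
move=> /walknP [[|c s] [//= [sz] /andP [eac ps] ls]].
exists c => //; apply/eqP; rewrite eqn_leq dist_le_walkn; last by apply/walknP; exists s.
by have := dist_triangle a c b; have := dist_edge_le1 eac; rewrite dn; lia.
Qed.

Lemma distC a b : symmetric e -> dist e a b = dist e b a.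
Proof.
by move=> e_sym; apply/eqP; rewrite eqn_leq !dist_le_walkn // walkn_rev // dist_walkn.
Qed.

End Distance.

Section GromovOnPaths.

Variables (T : finType) (e : rel T) (r : T).
Hypotheses (e_sym : symmetric e) (e_irr : irreflexive e)
           (e_conn : forall a b : T, connect e a b).

Local Notation d a := (dist e a r).
Local Notation gp := (gromov e r).

Lemma dist_edge_lipschitz a b : e a b -> (d a <= d b + 1)%N.
Proof. by move=> eab; rewrite addnC -(dist_edge e_conn e_irr eab) dist_triangle. Qed.

Lemma gromov_edge a b : e a b -> gp a b = ((d a)%:R + (d b)%:R - 1) / 2.
Proof. by move=> eab; rewrite /gromov (dist_edge e_conn e_irr eab). Qed.

Lemma geodesic_above a b g :
  g <= gp a b -> exists q, [/\ path e a q, last a q = b & all (>= g) (pairmap gp a q)].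
Proof.
move dab: (dist e a b) => n; elim: n a dab => [|n IHn] a dab g_le.
  by exists [::]; rewrite (dist_eq0 e_conn dab).
have [c eac dcb] := dist_succ e_conn dab.
have ac_ab := dist_triangle e_conn a c r; have cb_bc := dist_triangle e_conn b c r.
move: ac_ab cb_bc g_le; rewrite (distC e_conn b c e_sym) !(dist_edge e_conn e_irr eac) dcb.
rewrite -!(ler_nat rat) /gromov dab !natrD => ac_ab cb_bc g_le.
have g_cb : g <= gp c b by rewrite /gromov dcb; lra.
have [q [pq lq gq]] := IHn c dcb g_cb.
exists (c :: q); rewrite /= eac lq gq pq andbT; split=> //.
by rewrite /gromov (dist_edge e_conn e_irr eac); lra.
Qed.

Lemma path_above z s g :
  all (>= g) (pairmap gp z s) ->
  exists p, [/\ path e z p, last z p = last z s & all (>= g) (pairmap gp z p)].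
Proof.
elim: s z => [|w s IHs] z /=; first by exists [::].
case/andP => g_zw g_s; have [p [pp lp gp_p]] := IHs w g_s.
have [q [pq lq gq]] := geodesic_above g_zw.
by exists (q ++ p); rewrite cat_path last_cat pairmap_cat all_cat pq lq pp lp gq gp_p.
Qed.

Variables (x : T) (s : seq T).

Local Notation alpha := (alpha e r x s).

Lemma alpha_le_dist v : v \in x :: s -> (alpha <= d v)%N.
Proof.
rewrite /alpha; elim: s => [|w s' IHs] /=; first by rewrite inE => /eqP ->.
rewrite !inE geq_min => /or3P [vx|/eqP ->|vs].
- by rewrite IHs ?orbT // inE vx.
- by rewrite leqnn.
- by rewrite IHs ?orbT // inE vs orbT.
Qed.

Lemma alpha_attained : exists2 w, w \in x :: s & d w = alpha.
Proof.
rewrite /alpha; elim: s => [|w s' [u u_in du]] /=; first by exists x; rewrite ?inE.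
case: leqP => [dw_le|lt_dw]; first by exists w; rewrite ?inE ?eqxx ?orbT.
exists u; last by rewrite du.
by move: u_in; rewrite !inE => /orP [->|->]; rewrite ?orbT.
Qed.

Hypotheses (ps : path e x s) (s_ne : s != [::]).

Lemma seqval_path :
  seqval e r x s = if flat_edge e r x s then alpha%:R - 1 / 2 else alpha%:R.
Proof.
set Z := zip (x :: s) s.
have edge_val p : p \in Z -> [/\ 2 * gp p.1 p.2 + 1 = (d p.1 + d p.2)%:R,
    (alpha <= d p.1)%N, (alpha <= d p.2)%N,
    (d p.1 <= d p.2 + 1)%N & (d p.2 <= d p.1 + 1)%N].
  move=> pZ; have [e12 p1 p2] := path_zip ps pZ.
  have e21 : e p.2 p.1 by rewrite e_sym.
  rewrite gromov_edge // natrD !alpha_le_dist // !dist_edge_lipschitz //.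
  by split=> //; field.
have vZ v : v \in [seq gp p.1 p.2 | p <- Z] -> exists2 p, p \in Z & v = gp p.1 p.2.
  by move=> /mapP [p pZ ->]; exists p.
rewrite /seqval pairmap_zip /flat_edge -/Z.
case: hasP => [[p pZ /andP [/eqP p1 /eqP p2]] | no_flat]; apply: minl_eq.
- move=> _ /vZ [q qZ ->]; have [vq aq1 aq2 _ _] := edge_val q qZ.
  move: vq aq1 aq2; rewrite -!(ler_nat rat) natrD; lra.
- exists (gp p.1 p.2); first exact: map_f.
  have [vp _ _ _ _] := edge_val p pZ; move: vp; rewrite p1 p2 natrD; lra.
- move=> _ /vZ [q qZ ->]; have [vq aq1 aq2 _ _] := edge_val q qZ.
  have : (2 * alpha + 1 <= d q.1 + d q.2)%N.
    have : ~~ ((d q.1 == alpha) && (d q.2 == alpha)) by apply/negP => flat; apply: no_flat; exists q.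
    by move: aq1 aq2; case: eqP; case: eqP; lia.
  by move: vq; rewrite -(ler_nat rat) !natrD; lra.
- have [w w_in dw] := alpha_attained; have [q qZ qw] := zip_cover s_ne w_in.
  exists (gp q.1 q.2); first exact: map_f.
  have [vq aq1 aq2 lip12 lip21] := edge_val q qZ.
  have : (d q.1 + d q.2 <= 2 * alpha + 1)%N by case: qw lip12 lip21 aq1 aq2 => ->; rewrite dw; lia.
  by move: vq; rewrite -(ler_nat rat) !natrD; lra.
Qed.

Lemma seqval_path_halfint :
  exists2 m, (m <= 2 * d x + 1)%N & 2 * seqval e r x s + 1 = m%:R.
Proof.
have := alpha_le_dist (mem_head x s); rewrite seqval_path.
case: flat_edge => a_le.
  by exists (2 * alpha)%N; [lia | rewrite natrM; lra].
by exists (2 * alpha + 1)%N; [lia | rewrite natrD natrM; lra].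
Qed.

End GromovOnPaths.

Unset Implicit Arguments.

Theorem mainTheorem1 (T : finType) (e : rel T) (r x y : T) :
  symmetric e -> irreflexive e -> (forall a b : T, connect e a b) -> x != y ->
  (exists s : seq T, path e x s /\ maximizing e r x y s) /\
  (forall s : seq T, path e x s -> maximizing e r x y s ->
     seqval e r x s =
       (if flat_edge e r x s then (alpha e r x s)%:R - 1 / 2
        else (alpha e r x s)%:R)).
Proof.
move=> e_sym e_irr e_conn xy; split=> [|s ps [s_ne _ _]]; last exact: seqval_path.
have ne_of_last s : last x s = y -> s != [::] by case: s => //= yx; rewrite yx eqxx in xy.
have pairmap_ne s : s != [::] -> pairmap (gromov e r) x s != [::] by case: s.
pose to_y s := path e x s /\ last x s = y.
have [s0 [ps0 ls0] s0_max] :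
    exists2 s0, to_y s0 & forall s, to_y s -> 2 * seqval e r x s + 1 <= 2 * seqval e r x s0 + 1.
  apply: (@exists_max_nat_valued _ _ _ _ (2 * dist e x r + 1)).
    by have /connectP [p pp lp] := e_conn x y; exists p.
  by move=> s [ps ls]; apply: seqval_path_halfint => //; apply: ne_of_last.
exists s0; split=> //; split=> [|//|s s_ne ls]; first exact: ne_of_last.
have s_above : all (>= seqval e r x s) (pairmap (gromov e r) x s).
  by rewrite -le_minl ?pairmap_ne.
have [p [pp lp p_above]] := path_above e_sym e_irr e_conn s_above.
have := s0_max p (conj pp (etrans lp ls)).
have : seqval e r x s <= seqval e r x p by rewrite /seqval le_minl ?pairmap_ne ?ne_of_last ?lp.
lra.
Qed.
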